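(* The metric space $(\mathrm{Conf}^{lf}_\infty(\mathbb C),d_{\Sigma})$ is path-connected.
   Context: $\mathrm{Conf}^{lf}_\infty(\mathbb C)$ is the set of sequences $(x_j)_{j\ge1}$ of pairwise distinct complex numbers such that $\{j:|x_j|\le R\}$ is finite for all $R>0$, with metric $d_{\Sigma}(x,y)=\sum_j2^{-j}\min\{|x_j-y_j|,1\}+d_{\mathcal V}(P(x),P(y))$, where $P(x)=\{x_j\}$ and $d_{\mathcal V}$ is the vague metric $d_{\mathcal V}(A,B)=\sum_j 2^{-j}\frac{|\sum_{a\in A}\varphi_j(a)-\sum_{b\in B}\varphi_j(b)|}{1+|\sum_{a\in A}\varphi_j(a)-\sum_{b\in B}\varphi_j(b)|}$ for a fixed sequence $(\varphi_j)$ of compactly supported continuous real functions such that for each $m$ those supported in $\{|z|\le m\}$ are sup-norm dense among such functions supported in $\{|z|\le m\}$. *)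

From Stdlib Require Import Reals.
From Coquelicot Require Import Coquelicot.
Open Scope R_scope.

(* Sequences are indexed by nat starting at 0; the paper's x_j (j >= 1)
   is our x (j-1), so the weight 2^{-j} becomes (1/2)^(j+1). *)

Definition Conf_lf (x : nat -> C) : Prop :=
  (forall i j : nat, x i = x j -> i = j) /\
  (forall Rr : R, 0 < Rr -> exists N : nat, forall j : nat, Cmod (x j) <= Rr -> (j < N)%nat).

Definition compact_support (f : C -> R) : Prop :=
  exists M : R, forall z : C, M < Cmod z -> f z = 0.

Definition Cc (f : C -> R) : Prop :=
  (forall z : C, continuous f z) /\ compact_support f.

Definition supported_in (m : R) (f : C -> R) : Prop :=
  forall z : C, m < Cmod z -> f z = 0.

Definition vague_seq (phi : nat -> C -> R) : Prop :=
  (forall j, Cc (phi j)) /\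
  (forall m : nat, forall f : C -> R,
      Cc f -> supported_in (INR m) f ->
      forall eps : R, 0 < eps ->
        exists j : nat, supported_in (INR m) (phi j) /\
          forall z : C, Rabs (phi j z - f z) < eps).

(* sum_{a in P(x)} f(a); since the x_k are pairwise distinct and the
   configuration is locally finite, this is the (finitely supported) series
   sum_k f(x_k). *)
Definition sum_conf (f : C -> R) (x : nat -> C) : R :=
  Series (fun k => f (x k)).

Definition d_V (phi : nat -> C -> R) (x y : nat -> C) : R :=
  Series (fun j =>
    (/2) ^ (S j) *
      (Rabs (sum_conf (phi j) x - sum_conf (phi j) y) /
       (1 + Rabs (sum_conf (phi j) x - sum_conf (phi j) y)))).

Definition d_Sigma (phi : nat -> C -> R) (x y : nat -> C) : R :=
  Series (fun j => (/2) ^ (S j) * Rmin (Cmod (Cminus (x j) (y j))) 1)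
  + d_V phi x y.

Definition path_connected_Conf (phi : nat -> C -> R) : Prop :=
  forall x y : nat -> C, Conf_lf x -> Conf_lf y ->
    exists gamma : R -> nat -> C,
      (forall t : R, 0 <= t <= 1 -> Conf_lf (gamma t)) /\
      gamma 0 = x /\ gamma 1 = y /\
      (forall t : R, 0 <= t <= 1 -> forall eps : R, 0 < eps ->
         exists delta : R, 0 < delta /\
           forall s : R, 0 <= s <= 1 -> Rabs (s - t) < delta ->
             d_Sigma phi (gamma s) (gamma t) < eps).

From Stdlib Require Import Reals Lra Lia FunctionalExtensionality Cantor.
From Coquelicot Require Import Coquelicot.
Open Scope R_scope.

(* A family [g t] of configurations, [t] in [0,1], is a d_Sigma-continuous path as soon as
   every coordinate moves continuously, each [g t] is injective, and the points escape to
   infinity uniformly in [t]: then each [sum_conf (phi j) (g t)] is a fixed finite sum, and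
   the tails of both series defining d_Sigma are geometrically small.

   To join [x] to [y], fix radii [T k] with [4 T k < T (k+1)] and [2 |x k|, 2 |y k| <= T k].
   Push each [x k] outward along its own direction tilted by [1 + i h] until it lies in
   the annulus [T k / 2 <= |z| <= T k]; two trajectories can only collide for countably
   many values of [h], so some [h] in [0,1] avoids all collisions.  Once the [k]-th point
   lies in the [k]-th annulus, every segment between two points of that annulus with
   nonnegative inner product stays in [T k / 4 <= |z| <= T k], and these thick annuli are
   still disjoint; through such segments the points are turned onto the positive real
   axis, slid to the corresponding points for [y], and the construction for [y] is run
   backwards. *)

(** * Continuity of paths for [d_Sigma] *)

Lemma half_pow_pos (n : nat) : 0 < (/2) ^ n.
Proof. apply pow_lt; lra. Qed.

Lemma is_series_half_pow : is_series (fun n => (/2) ^ S n) 1.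
Proof.
  pose proof (is_series_geom (/2) ltac:(rewrite Rabs_pos_eq; lra)) as Hgeom.
  replace 1 with (/2 * / (1 - /2)) by field.
  exact (is_series_scal_l (/2) _ _ Hgeom).
Qed.

Lemma is_series_zero : is_series (fun _ : nat => 0) 0.
Proof.
  pose proof (is_series_scal_r 0 _ _ is_series_half_pow) as H0.
  rewrite Rmult_0_r in H0.
  apply (is_series_ext _ _ _ (fun n => Rmult_0_r _) H0).
Qed.

Lemma Series_finite (a : nat -> R) (N : nat) :
  (forall k, (N < k)%nat -> a k = 0) -> Series a = sum_f_R0 a N.
Proof.
  intros Ha; apply is_series_unique.
  apply (is_series_decr_n a (S N)); [lia|].
  rewrite sum_n_Reals; simpl pred.
  replace (plus _ _) with 0 by (unfold plus, opp; simpl; ring).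
  apply (is_series_ext (fun _ => 0)); [intros n; rewrite Ha; auto; lia|].
  exact is_series_zero.
Qed.

Lemma ex_series_half_pow_scal (c : R) : ex_series (fun n => c * (/2) ^ S n).
Proof. eexists; exact (is_series_scal_l c _ _ is_series_half_pow). Qed.

Definition half_pow_tail (J n : nat) : R := if (n <? J)%nat then 0 else (/2) ^ S n.

Lemma half_pow_tail_shift (J n : nat) :
  half_pow_tail J (J + n) = (/2) ^ J * (/2) ^ S n.
Proof.
  unfold half_pow_tail; destruct (Nat.ltb_spec (J + n) J); [lia|].
  rewrite <- pow_add; f_equal; lia.
Qed.

Lemma ex_series_half_pow_tail (J : nat) : ex_series (half_pow_tail J).
Proof.
  apply (ex_series_incr_n _ J).
  apply (ex_series_ext (fun n => (/2) ^ J * (/2) ^ S n)).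
  - intros n; symmetry; apply half_pow_tail_shift.
  - apply ex_series_half_pow_scal.
Qed.

Lemma Series_half_pow_tail (J : nat) : Series (half_pow_tail J) = (/2) ^ J.
Proof.
  rewrite (Series_incr_n_aux _ J).
  - rewrite (Series_ext _ _ (half_pow_tail_shift J)), Series_scal_l.
    rewrite (is_series_unique _ _ is_series_half_pow); ring.
  - intros k Hk; unfold half_pow_tail; destruct (Nat.ltb_spec k J); [auto|lia].
Qed.

(* The weights [2^-(n+1)] have total mass 1 and mass [2^-J] beyond [J]. *)
Lemma Series_weighted_le (a : nat -> R) (J : nat) (e : R) :
  0 <= e -> (forall n, 0 <= a n <= 1) -> (forall n, (n < J)%nat -> a n <= e) ->
  Series (fun n => (/2) ^ S n * a n) <= e + (/2) ^ J.
Proof.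
  intros He Ha HJ.
  replace (e + (/2) ^ J) with (Series (fun n => e * (/2) ^ S n + half_pow_tail J n)).
  2:{ rewrite Series_plus, Series_scal_l, Series_half_pow_tail by
        (auto using ex_series_half_pow_tail, ex_series_half_pow_scal).
      rewrite (is_series_unique _ _ is_series_half_pow); ring. }
  apply Series_le.
  2:{ exact (ex_series_plus _ _ (ex_series_half_pow_scal e) (ex_series_half_pow_tail J)). }
  intros n; pose proof (half_pow_pos (S n)); specialize (Ha n).
  split; [apply Rmult_le_pos; lra|].
  unfold half_pow_tail; destruct (Nat.ltb_spec n J) as [Hn|Hn].
  - specialize (HJ n Hn); nra.
  - assert (0 <= e * (/2) ^ S n) by (apply Rmult_le_pos; lra); nra.
Qed.

Definition cont01_at {X : Type} (d : X -> X -> R) (F : R -> X) (t : R) : Prop :=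
  forall eps, 0 < eps -> exists delta, 0 < delta /\
    forall s, 0 <= s <= 1 -> Rabs (s - t) < delta -> d (F s) (F t) < eps.

Definition Cdist (a b : C) : R := Cmod (Cminus a b).

Lemma cont01_at_finite {X : Type} (d : X -> X -> R) (F : nat -> R -> X) (t : R) (J : nat) :
  (forall j, (j < J)%nat -> cont01_at d (F j) t) ->
  forall eps, 0 < eps -> exists delta, 0 < delta /\ forall j, (j < J)%nat ->
    forall s, 0 <= s <= 1 -> Rabs (s - t) < delta -> d (F j s) (F j t) < eps.
Proof.
  intros HF eps Heps; induction J as [|J IH].
  - exists 1; split; [lra|]; intros; lia.
  - destruct IH as [d1 [Hd1 H1]]; [intros j Hj; apply HF; lia|].
    destruct (HF J (Nat.lt_succ_diag_r J) eps Heps) as [d2 [Hd2 H2]].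
    exists (Rmin d1 d2); split; [apply Rmin_pos; auto|].
    intros j Hj s Hs Hst; pose proof (Rmin_l d1 d2); pose proof (Rmin_r d1 d2).
    destruct (Nat.eq_dec j J) as [->|Hne].
    + apply H2; auto; lra.
    + apply H1; auto; [lia|lra].
Qed.

Lemma cont01_at_plus (F G : R -> R) (t : R) :
  cont01_at Rdist F t -> cont01_at Rdist G t -> cont01_at Rdist (fun s => F s + G s) t.
Proof.
  intros HF HG eps Heps.
  destruct (HF (eps / 2)) as [d1 [Hd1 H1]]; [lra|].
  destruct (HG (eps / 2)) as [d2 [Hd2 H2]]; [lra|].
  exists (Rmin d1 d2); split; [apply Rmin_pos; auto|].
  intros s Hs Hst; pose proof (Rmin_l d1 d2); pose proof (Rmin_r d1 d2).
  specialize (H1 s Hs ltac:(lra)); specialize (H2 s Hs ltac:(lra)); unfold Rdist in *.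
  apply Rabs_def2 in H1; apply Rabs_def2 in H2; apply Rabs_def1; lra.
Qed.

Lemma cont01_at_sum (a : R -> nat -> R) (N : nat) (t : R) :
  (forall k, (k <= N)%nat -> cont01_at Rdist (fun s => a s k) t) ->
  cont01_at Rdist (fun s => sum_f_R0 (a s) N) t.
Proof.
  induction N as [|N IH]; intros Ha; simpl.
  - apply Ha; lia.
  - apply cont01_at_plus; [apply IH; intros k Hk|]; apply Ha; lia.
Qed.

Lemma cont01_at_comp (f : C -> R) (g : R -> C) (t : R) :
  continuous f (g t) -> cont01_at Cdist g t -> cont01_at Rdist (fun s => f (g s)) t.
Proof.
  intros Hf Hg eps Heps.
  destruct (proj1 (filterlim_locally f (f (g t))) Hf (mkposreal _ Heps)) as [r Hr].
  destruct (Hg r (cond_pos r)) as [delta [Hdelta H]].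
  exists delta; split; auto; intros s Hs Hst.
  apply (Hr (g s)), C_NormedModule_mixin_compat1, H; auto.
Qed.

Lemma cont01_at_ext {X : Type} (d : X -> X -> R) (F G : R -> X) (t : R) :
  (forall s, 0 <= s <= 1 -> F s = G s) -> 0 <= t <= 1 ->
  cont01_at d G t -> cont01_at d F t.
Proof.
  intros HFG Ht HG eps Heps; destruct (HG eps Heps) as [delta [Hdelta H]].
  exists delta; split; auto; intros s Hs Hst; rewrite !HFG; auto.
Qed.

Definition concat {X : Type} (F G : R -> X) (t : R) : X :=
  if Rle_dec t (1/2) then F (2 * t) else G (2 * t - 1).

Definition reverse {X : Type} (F : R -> X) (t : R) : X := F (1 - t).

Lemma concat_0 {X : Type} (F G : R -> X) : concat F G 0 = F 0.
Proof. unfold concat; destruct (Rle_dec 0 (1/2)); [f_equal; ring|lra]. Qed.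

Lemma concat_1 {X : Type} (F G : R -> X) : concat F G 1 = G 1.
Proof. unfold concat; destruct (Rle_dec 1 (1/2)); [lra|f_equal; ring]. Qed.

Lemma reverse_0 {X : Type} (F : R -> X) : reverse F 0 = F 1.
Proof. unfold reverse; f_equal; ring. Qed.

Lemma reverse_1 {X : Type} (F : R -> X) : reverse F 1 = F 0.
Proof. unfold reverse; f_equal; ring. Qed.

Lemma cont01_at_reverse {X : Type} (d : X -> X -> R) (F : R -> X) (t : R) :
  cont01_at d F (1 - t) -> cont01_at d (reverse F) t.
Proof.
  intros HF eps Heps; destruct (HF eps Heps) as [delta [Hdelta H]].
  exists delta; split; auto; intros s Hs Hst; apply H; [lra|].
  replace (1 - s - (1 - t)) with (- (s - t)) by ring; rewrite Rabs_Ropp; auto.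
Qed.

Lemma cont01_at_concat {X : Type} (d : X -> X -> R) (F G : R -> X) (t : R) :
  F 1 = G 0 -> 0 <= t <= 1 ->
  (forall u, 0 <= u <= 1 -> cont01_at d F u) -> (forall u, 0 <= u <= 1 -> cont01_at d G u) ->
  cont01_at d (concat F G) t.
Proof.
  intros HFG Ht HF HG eps Heps; unfold concat.
  destruct (Rtotal_order t (1/2)) as [Hlt|[->|Hgt]].
  - destruct (HF (2 * t) ltac:(lra) eps Heps) as [delta [Hdelta H]].
    exists (Rmin (delta / 2) (1/2 - t)); split; [apply Rmin_pos; lra|].
    intros s Hs Hst.
    pose proof (Rmin_l (delta / 2) (1/2 - t)); pose proof (Rmin_r (delta / 2) (1/2 - t)).
    apply Rabs_def2 in Hst.
    destruct (Rle_dec s (1/2)); [|lra]; destruct (Rle_dec t (1/2)); [|lra].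
    apply H; [lra|apply Rabs_def1; lra].
  - destruct (HF 1 ltac:(lra) eps Heps) as [d1 [Hd1 H1]].
    destruct (HG 0 ltac:(lra) eps Heps) as [d2 [Hd2 H2]].
    exists (Rmin (d1 / 2) (d2 / 2)); split; [apply Rmin_pos; lra|].
    intros s Hs Hst.
    pose proof (Rmin_l (d1 / 2) (d2 / 2)); pose proof (Rmin_r (d1 / 2) (d2 / 2)).
    apply Rabs_def2 in Hst.
    destruct (Rle_dec (1/2) (1/2)); [|lra]; replace (2 * (1/2)) with 1 by field.
    destruct (Rle_dec s (1/2)).
    + apply H1; [lra|apply Rabs_def1; lra].
    + rewrite HFG; apply H2; [lra|apply Rabs_def1; lra].
  - destruct (HG (2 * t - 1) ltac:(lra) eps Heps) as [delta [Hdelta H]].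
    exists (Rmin (delta / 2) (t - 1/2)); split; [apply Rmin_pos; lra|].
    intros s Hs Hst.
    pose proof (Rmin_l (delta / 2) (t - 1/2)); pose proof (Rmin_r (delta / 2) (t - 1/2)).
    apply Rabs_def2 in Hst.
    destruct (Rle_dec s (1/2)); [lra|]; destruct (Rle_dec t (1/2)); [lra|].
    apply H; [lra|apply Rabs_def1; lra].
Qed.

Record admissible (g : R -> nat -> C) : Prop := {
  admissible_inj : forall t, 0 <= t <= 1 -> forall i j, g t i = g t j -> i = j;
  admissible_escape : forall M, exists N,
    forall t, 0 <= t <= 1 -> forall k, (N <= k)%nat -> M < Cmod (g t k);
  admissible_cont : forall k t, 0 <= t <= 1 -> cont01_at Cdist (fun s => g s k) t }.

Lemma admissible_Conf_lf (g : R -> nat -> C) (t : R) :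
  admissible g -> 0 <= t <= 1 -> Conf_lf (g t).
Proof.
  intros Hg Ht; split; [apply (admissible_inj g Hg t Ht)|].
  intros Rr _; destruct (admissible_escape g Hg Rr) as [N HN].
  exists N; intros j Hj; destruct (Nat.lt_ge_cases j N) as [|HNj]; auto.
  specialize (HN t Ht j HNj); lra.
Qed.

Lemma admissible_sum_conf_cont (g : R -> nat -> C) (f : C -> R) (t : R) :
  admissible g -> Cc f -> 0 <= t <= 1 -> cont01_at Rdist (fun s => sum_conf f (g s)) t.
Proof.
  intros Hg [Hf [M HM]] Ht.
  destruct (admissible_escape g Hg M) as [N HN].
  apply (cont01_at_ext _ _ (fun s => sum_f_R0 (fun k => f (g s k)) N)); auto.
  - intros s Hs; apply Series_finite; intros k Hk; apply HM, (HN s Hs); lia.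
  - apply cont01_at_sum; intros k _.
    apply cont01_at_comp; [apply Hf|apply (admissible_cont g Hg k t Ht)].
Qed.

Lemma d_Sigma_le (phi : nat -> C -> R) (u v : nat -> C) (J : nat) (e : R) :
  0 <= e ->
  (forall j, (j < J)%nat -> Cmod (Cminus (u j) (v j)) <= e) ->
  (forall j, (j < J)%nat -> Rabs (sum_conf (phi j) u - sum_conf (phi j) v) <= e) ->
  d_Sigma phi u v <= 2 * (e + (/2) ^ J).
Proof.
  intros He Huv Hphi; unfold d_Sigma, d_V.
  assert (Hcoord : Series (fun j => (/2) ^ S j * Rmin (Cmod (Cminus (u j) (v j))) 1)
                   <= e + (/2) ^ J).
  { apply Series_weighted_le; auto.
    - intros n; split; [apply Rmin_glb; [apply Cmod_ge_0|lra]|apply Rmin_r].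
    - intros n Hn; specialize (Huv n Hn).
      pose proof (Rmin_l (Cmod (Cminus (u n) (v n))) 1); lra. }
  assert (Hvague : Series (fun j => (/2) ^ S j *
             (Rabs (sum_conf (phi j) u - sum_conf (phi j) v) /
              (1 + Rabs (sum_conf (phi j) u - sum_conf (phi j) v)))) <= e + (/2) ^ J).
  { apply Series_weighted_le; auto; intros n;
      set (w := Rabs (sum_conf (phi n) u - sum_conf (phi n) v));
      assert (Hw : 0 <= w) by apply Rabs_pos;
      assert (Hfrac : w / (1 + w) * (1 + w) = w) by (field; lra).
    - split; [apply Rdiv_le_0_compat; lra|]; nra.
    - intros Hn; specialize (Hphi n Hn); fold w in Hphi; nra. }
  lra.
Qed.

Lemma admissible_d_Sigma_cont (phi : nat -> C -> R) (g : R -> nat -> C) (t : R) :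
  (forall j, Cc (phi j)) -> admissible g -> 0 <= t <= 1 -> cont01_at (d_Sigma phi) g t.
Proof.
  intros Hphi Hg Ht eps Heps.
  destruct (pow_lt_1_zero (/2) ltac:(rewrite Rabs_pos_eq; lra) (eps / 4) ltac:(lra)) as [J HJ].
  specialize (HJ J (Nat.le_refl J)); rewrite Rabs_pos_eq in HJ by (left; apply half_pow_pos).
  destruct (cont01_at_finite Cdist (fun j s => g s j) t J
              (fun j _ => admissible_cont g Hg j t Ht) (eps / 4) ltac:(lra)) as [d1 [Hd1 H1]].
  destruct (cont01_at_finite Rdist (fun j s => sum_conf (phi j) (g s)) t J
              (fun j _ => admissible_sum_conf_cont g (phi j) t Hg (Hphi j) Ht)
              (eps / 4) ltac:(lra)) as [d2 [Hd2 H2]].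
  exists (Rmin d1 d2); split; [apply Rmin_pos; auto|].
  intros s Hs Hst; pose proof (Rmin_l d1 d2); pose proof (Rmin_r d1 d2).
  assert (Hle : d_Sigma phi (g s) (g t) <= 2 * (eps / 4 + (/2) ^ J)).
  { apply d_Sigma_le; [lra|intros j Hj; left..].
    - apply (H1 j Hj s Hs); lra.
    - apply (H2 j Hj s Hs); lra. }
  lra.
Qed.

Lemma admissible_reverse (g : R -> nat -> C) : admissible g -> admissible (reverse g).
Proof.
  intros [Hinj Hesc Hcont]; unfold reverse; split.
  - intros t Ht; apply Hinj; lra.
  - intros M; destruct (Hesc M) as [N HN]; exists N; intros t Ht; apply HN; lra.
  - intros k t Ht; apply (cont01_at_reverse Cdist (fun s => g s k)), Hcont; lra.
Qed.

Lemma concat_apply {X : Type} (F G : R -> nat -> X) (t : R) (k : nat) :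
  concat F G t k = concat (fun s => F s k) (fun s => G s k) t.
Proof. unfold concat; destruct (Rle_dec t (1/2)); reflexivity. Qed.

Lemma admissible_concat (g1 g2 : R -> nat -> C) :
  admissible g1 -> admissible g2 -> g1 1 = g2 0 -> admissible (concat g1 g2).
Proof.
  intros [Hinj1 Hesc1 Hcont1] [Hinj2 Hesc2 Hcont2] H12; split.
  - intros t Ht; unfold concat; destruct (Rle_dec t (1/2)); [apply Hinj1|apply Hinj2]; lra.
  - intros M; destruct (Hesc1 M) as [N1 HN1]; destruct (Hesc2 M) as [N2 HN2].
    exists (max N1 N2); intros t Ht k Hk; unfold concat.
    destruct (Rle_dec t (1/2)); [apply HN1|apply HN2]; lra || lia.
  - intros k t Ht.
    apply (cont01_at_ext _ _ (concat (fun s => g1 s k) (fun s => g2 s k))); auto.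
    + intros s _; apply concat_apply.
    + apply cont01_at_concat; auto; rewrite H12; reflexivity.
Qed.

(** * A real number avoiding a countable set *)

(* Nested intervals: step [n] keeps an outer third of the current interval that misses [u n]. *)
Fixpoint avoiding_interval (u : nat -> R) (n : nat) : R * R :=
  match n with
  | O => (0, 1)
  | S n =>
      let (a, b) := avoiding_interval u n in
      if Rlt_dec (u n) ((a + b) / 2) then (a + 2 * (b - a) / 3, b) else (a, a + (b - a) / 3)
  end.

Lemma avoiding_interval_step (u : nat -> R) (n : nat) :
  let (a, b) := avoiding_interval u n in let (a', b') := avoiding_interval u (S n) in
  a < b -> a <= a' /\ b' <= b /\ a' < b' /\ (u n < a' \/ b' < u n).
Proof.
  simpl; destruct (avoiding_interval u n) as [a b].
  destruct (Rlt_dec (u n) ((a + b) / 2)); simpl; lra.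
Qed.

Lemma avoiding_interval_nonempty (u : nat -> R) (n : nat) :
  fst (avoiding_interval u n) < snd (avoiding_interval u n).
Proof.
  induction n as [|n IH]; [simpl; lra|].
  pose proof (avoiding_interval_step u n) as Hstep.
  destruct (avoiding_interval u n), (avoiding_interval u (S n)); simpl in *; tauto.
Qed.

Lemma avoiding_interval_nested (u : nat -> R) (n m : nat) : (n <= m)%nat ->
  fst (avoiding_interval u n) <= fst (avoiding_interval u m) /\
  snd (avoiding_interval u m) <= snd (avoiding_interval u n).
Proof.
  induction 1 as [|m _ IH]; [lra|].
  pose proof (avoiding_interval_step u m) as Hstep.
  pose proof (avoiding_interval_nonempty u m) as Hne.
  destruct (avoiding_interval u m), (avoiding_interval u (S m)); simpl in *; lra.
Qed.

Lemma avoiding_interval_left_le_right (u : nat -> R) (n m : nat) :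
  fst (avoiding_interval u n) <= snd (avoiding_interval u m).
Proof.
  pose proof (avoiding_interval_nested u n (max n m) (Nat.le_max_l n m)).
  pose proof (avoiding_interval_nested u m (max n m) (Nat.le_max_r n m)).
  pose proof (avoiding_interval_nonempty u (max n m)); lra.
Qed.

Lemma exists_unit_real_not_in_range (u : nat -> R) :
  exists r, 0 <= r <= 1 /\ forall n, r <> u n.
Proof.
  set (E := fun x => exists n, x = fst (avoiding_interval u n)).
  destruct (completeness E) as [r [Hub Hlub]].
  - exists 1; intros x [n ->]; apply (avoiding_interval_left_le_right u n 0).
  - exists 0, O; reflexivity.
  - assert (Hleft : forall n, fst (avoiding_interval u n) <= r)
      by (intros n; apply Hub; exists n; auto).
    assert (Hright : forall m, r <= snd (avoiding_interval u m))
      by (intros m; apply Hlub; intros x [n ->]; apply avoiding_interval_left_le_right).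
    exists r; split; [split; [apply (Hleft O)|apply (Hright O)]|].
    intros n Hr; specialize (Hleft (S n)); specialize (Hright (S n)).
    pose proof (avoiding_interval_step u n) as Hstep.
    pose proof (avoiding_interval_nonempty u n) as Hne.
    destruct (avoiding_interval u n), (avoiding_interval u (S n)); simpl in *; lra.
Qed.

Lemma exists_unit_real_avoiding2 (u v : nat -> nat -> R) :
  exists r, 0 <= r <= 1 /\ forall k l, r <> u k l /\ r <> v k l.
Proof.
  destruct (exists_unit_real_not_in_range (fun n =>
    let (p, b) := of_nat n in let (k, l) := of_nat p in
    match b with O => u k l | _ => v k l end)) as [r [Hr Havoid]].
  exists r; split; auto; intros k l; split; intros Heq.
  - apply (Havoid (to_nat (to_nat (k, l), O))); rewrite !cancel_of_to; exact Heq.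
  - apply (Havoid (to_nat (to_nat (k, l), 1%nat))); rewrite !cancel_of_to; exact Heq.
Qed.

(** * Segments in annuli *)

Lemma Cmod_ge_of_sq (m : R) (z : C) : m ^ 2 <= Re z ^ 2 + Im z ^ 2 -> m <= Cmod z.
Proof. rewrite <- Cmod2_alt; intros H; pose proof (Cmod_ge_0 z); nra. Qed.

Lemma Cmod_le_of_sq (m : R) (z : C) : 0 <= m -> Re z ^ 2 + Im z ^ 2 <= m ^ 2 -> Cmod z <= m.
Proof. rewrite <- Cmod2_alt; intros Hm H; pose proof (Cmod_ge_0 z); nra. Qed.

Definition segment (p q : C) (t : R) : C := Cplus p (Cmult (RtoC t) (Cminus q p)).

Lemma segment_0 (p q : C) : segment p q 0 = p.
Proof. unfold segment; ring. Qed.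

Lemma segment_1 (p q : C) : segment p q 1 = q.
Proof. unfold segment; ring. Qed.

Lemma Cdist_segment (p q : C) (s t : R) :
  Cdist (segment p q s) (segment p q t) = Rabs (s - t) * Cmod (Cminus q p).
Proof.
  unfold Cdist, segment; rewrite <- Cmod_R, <- Cmod_mult, RtoC_minus; f_equal; ring.
Qed.

Lemma cont01_at_segment (p q : C) (t : R) : cont01_at Cdist (segment p q) t.
Proof.
  intros eps Heps; pose proof (Cmod_ge_0 (Cminus q p)).
  exists (eps / (Cmod (Cminus q p) + 1)); split; [apply Rdiv_lt_0_compat; lra|].
  intros s _ Hst; rewrite Cdist_segment.
  apply (Rmult_lt_compat_r (Cmod (Cminus q p) + 1)) in Hst; [|lra].
  unfold Rdiv in Hst; rewrite Rmult_assoc, Rinv_l in Hst by lra.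
  pose proof (Rabs_pos (s - t)); nra.
Qed.

Lemma admissible_segments (p q : nat -> C) :
  (forall t, 0 <= t <= 1 -> forall i j,
     segment (p i) (q i) t = segment (p j) (q j) t -> i = j) ->
  (forall M, exists N, forall t, 0 <= t <= 1 -> forall k, (N <= k)%nat ->
     M < Cmod (segment (p k) (q k) t)) ->
  admissible (fun t k => segment (p k) (q k) t).
Proof. intros Hinj Hesc; split; auto; intros k t _; apply cont01_at_segment. Qed.

(* [|(1-t) p + t q|^2 >= ((1-t)^2 + t^2) m^2 >= m^2 / 2] when [<p, q> >= 0]; the upper
   bound is the triangle inequality. *)
Lemma Cmod_segment_annulus (p q : C) (m M t : R) :
  0 <= t <= 1 -> 0 <= m ->
  m <= Cmod p <= M -> m <= Cmod q <= M -> 0 <= Re p * Re q + Im p * Im q ->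
  m / 2 <= Cmod (segment p q t) <= M.
Proof.
  intros Ht Hm Hp Hq Hdot; split.
  - apply Cmod_ge_of_sq.
    assert (Hp2 : m ^ 2 <= Re p ^ 2 + Im p ^ 2) by (rewrite <- Cmod2_alt; nra).
    assert (Hq2 : m ^ 2 <= Re q ^ 2 + Im q ^ 2) by (rewrite <- Cmod2_alt; nra).
    replace (Re (segment p q t) ^ 2 + Im (segment p q t) ^ 2) with
      ((1 - t) ^ 2 * (Re p ^ 2 + Im p ^ 2) + 2 * (t * (1 - t)) * (Re p * Re q + Im p * Im q)
       + t ^ 2 * (Re q ^ 2 + Im q ^ 2))
      by (destruct p, q; cbv [segment Re Im Cplus Cmult Cminus Copp RtoC fst snd]; ring).
    assert (0 <= t * (1 - t) * (Re p * Re q + Im p * Im q)) by (apply Rmult_le_pos; nra).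
    assert ((1 - t) ^ 2 * m ^ 2 <= (1 - t) ^ 2 * (Re p ^ 2 + Im p ^ 2))
      by (apply Rmult_le_compat_l; [apply pow2_ge_0|auto]).
    assert (t ^ 2 * m ^ 2 <= t ^ 2 * (Re q ^ 2 + Im q ^ 2))
      by (apply Rmult_le_compat_l; [apply pow2_ge_0|auto]).
    assert (0 <= (2 * t - 1) ^ 2 * m ^ 2) by (apply Rmult_le_pos; apply pow2_ge_0).
    nra.
  - replace (segment p q t) with (Cplus (Cmult (RtoC (1 - t)) p) (Cmult (RtoC t) q))
      by (unfold segment; rewrite RtoC_minus; ring).
    eapply Rle_trans; [apply Cmod_triangle|].
    rewrite !Cmod_mult, !Cmod_R, Rabs_pos_eq, (Rabs_pos_eq t) by lra; nra.
Qed.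

Record shells (T : nat -> R) : Prop := {
  shells_pos : forall k, 0 < T k;
  shells_grow : forall k, 4 * T k < T (S k);
  shells_unbounded : forall k, INR k <= T k }.

Lemma shells_separated (T : nat -> R) (k l : nat) : shells T -> (k < l)%nat -> 4 * T k < T l.
Proof.
  intros [Hpos Hgrow _] Hkl; induction Hkl as [|l _ IH]; [apply Hgrow|].
  specialize (Hgrow l); specialize (Hpos l); lra.
Qed.

Lemma admissible_segments_in_shells (T : nat -> R) (p q : nat -> C) :
  shells T ->
  (forall t, 0 <= t <= 1 -> forall k, T k / 4 <= Cmod (segment (p k) (q k) t) <= T k) ->
  admissible (fun t k => segment (p k) (q k) t).
Proof.
  intros HT Hann; apply admissible_segments.
  - intros t Ht i j Heq; pose proof (Hann t Ht i); pose proof (Hann t Ht j); rewrite Heq in *.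
    destruct (Nat.lt_total i j) as [Hij|[Hij|Hij]]; auto; exfalso.
    + pose proof (shells_separated T i j HT Hij); lra.
    + pose proof (shells_separated T j i HT Hij); lra.
  - intros M; destruct (INR_archimed 1 (4 * M)) as [N HN]; [lra|].
    exists N; intros t Ht k Hk; pose proof (Hann t Ht k).
    pose proof (shells_unbounded T HT k); apply le_INR in Hk; lra.
Qed.

Lemma admissible_segments_annuli (T : nat -> R) (p q : nat -> C) :
  shells T ->
  (forall k, T k / 2 <= Cmod (p k) <= T k) -> (forall k, T k / 2 <= Cmod (q k) <= T k) ->
  (forall k, 0 <= Re (p k) * Re (q k) + Im (p k) * Im (q k)) ->
  admissible (fun t k => segment (p k) (q k) t).
Proof.
  intros HT Hp Hq Hdot; apply (admissible_segments_in_shells T); auto.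
  intros t Ht k; pose proof (shells_pos T HT k).
  replace (T k / 4) with (T k / 2 / 2) by field.
  apply Cmod_segment_annulus; auto; lra.
Qed.

(** * Pushing a configuration out to the shells *)

Definition unit_dir (z : C) : C := if Ceq_dec z 0 then RtoC 1 else Cmult (RtoC (/ Cmod z)) z.

Lemma unit_dir_polar (z : C) : z = Cmult (RtoC (Cmod z)) (unit_dir z).
Proof.
  unfold unit_dir; destruct (Ceq_dec z 0) as [->|Hz]; [rewrite Cmod_0; ring|].
  pose proof (Cmod_gt_0 z) as Hpos; rewrite Cmult_assoc, <- RtoC_mult, Rinv_r, Cmult_1_l; auto.
  apply Rgt_not_eq, Hpos, Hz.
Qed.

Lemma Cmod_unit_dir (z : C) : Cmod (unit_dir z) = 1.
Proof.
  unfold unit_dir; destruct (Ceq_dec z 0) as [_|Hz]; [apply Cmod_1|].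
  pose proof (proj1 (Cmod_gt_0 z) Hz).
  rewrite Cmod_mult, Cmod_R, Rabs_pos_eq by (left; apply Rinv_0_lt_compat; auto).
  field; lra.
Qed.

Lemma Cmod_tilted (e s h : R) : 0 <= e -> 0 <= s <= e -> 0 <= h <= 1 ->
  e <= Cmod (e, s * h) <= 2 * e.
Proof.
  intros He Hs Hh; split.
  - apply Cmod_ge_of_sq; simpl; nra.
  - apply Cmod_le_of_sq; simpl; [lra|].
    assert (s * h <= e) by nra; assert (0 <= s * h) by nra; nra.
Qed.

Section Push.

Variables (x : nat -> C) (T : nat -> R) (h : R).

Definition push_len (k : nat) : R := T k / 2 - Cmod (x k).

Definition push_end (k : nat) : C :=
  Cplus (x k) (Cmult (RtoC (push_len k)) (Cmult (1, h) (unit_dir (x k)))).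

Definition push (t : R) (k : nat) : C := segment (x k) (push_end k) t.

(* If two trajectories meet at time [t > 0], then [h] is this ratio. *)
Definition push_collision (i j : nat) : R :=
  let W := Cdiv (Cminus (x i) (x j))
                (Cminus (Cmult (RtoC (push_len j)) (unit_dir (x j)))
                        (Cmult (RtoC (push_len i)) (unit_dir (x i)))) in
  Im W / Re W.

Hypothesis x_in_shells : forall k, 2 * Cmod (x k) <= T k.
Hypothesis h_unit : 0 <= h <= 1.

Lemma push_polar (t : R) (k : nat) :
  push t k = Cmult (unit_dir (x k)) (Cmod (x k) + t * push_len k, t * push_len k * h).
Proof.
  unfold push, push_end, segment; pose proof (unit_dir_polar (x k)) as Hpolar.
  set (u := unit_dir (x k)) in *; set (e := Cmod (x k)) in *; rewrite Hpolar.
  destruct u; cbv [Cplus Cmult Cminus Copp RtoC fst snd]; f_equal; ring.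
Qed.

Lemma Cmod_push (t : R) (k : nat) : 0 <= t <= 1 ->
  Cmod (x k) + t * push_len k <= Cmod (push t k) <= 2 * (Cmod (x k) + t * push_len k).
Proof.
  intros Ht; rewrite push_polar, Cmod_mult, Cmod_unit_dir, Rmult_1_l.
  specialize (x_in_shells k); pose proof (Cmod_ge_0 (x k)); unfold push_len in *.
  apply Cmod_tilted; [nra|split; nra|auto].
Qed.

Lemma Cmod_push_end (k : nat) : T k / 2 <= Cmod (push_end k) <= T k.
Proof.
  replace (push_end k) with (push 1 k) by apply segment_1.
  pose proof (Cmod_push 1 k ltac:(lra)); unfold push_len in *; lra.
Qed.

Lemma push_inj (t : R) (i j : nat) :
  (forall i j, x i = x j -> i = j) -> (forall i j, h <> push_collision i j) ->
  0 <= t <= 1 -> push t i = push t j -> i = j.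
Proof.
  intros Hx Hh Ht E; destruct (Nat.eq_dec i j) as [|Hne]; auto; exfalso.
  set (D := Cminus (Cmult (RtoC (push_len j)) (unit_dir (x j)))
                   (Cmult (RtoC (push_len i)) (unit_dir (x i)))).
  assert (K : Cminus (x i) (x j) = Cmult (Cmult (RtoC t) (1, h)) D).
  { transitivity (Cplus (Cminus (x i) (x j)) (Cminus (push t j) (push t i))).
    - rewrite E; ring.
    - unfold D, push, push_end, segment; ring. }
  assert (Hdiff : Cminus (x i) (x j) <> 0).
  { intros F; apply Hne, Hx.
    replace (x i) with (Cplus (Cminus (x i) (x j)) (x j)) by ring; rewrite F; ring. }
  assert (Ht0 : t <> 0) by (intros ->; apply Hdiff; rewrite K; ring).
  assert (HD : D <> 0) by (intros F; apply Hdiff; rewrite K, F; ring).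
  apply (Hh i j); unfold push_collision; fold D.
  replace (Cdiv (Cminus (x i) (x j)) D) with (Cmult (RtoC t) (1, h))
    by (rewrite K; field; auto).
  cbv [Cmult RtoC Re Im fst snd]; field; auto.
Qed.

Lemma admissible_push :
  Conf_lf x -> (forall i j, h <> push_collision i j) -> admissible push.
Proof.
  intros [Hx Hlf] Hh; apply admissible_segments.
  - intros t Ht i j; apply push_inj; auto.
  - intros M; destruct (Hlf (Rmax M 1)) as [N HN]; [pose proof (Rmax_r M 1); lra|].
    exists N; intros t Ht k Hk; change (M < Cmod (push t k)).
    assert (Hfar : Rmax M 1 < Cmod (x k))
      by (apply Rnot_le_lt; intros F; specialize (HN k F); lia).
    pose proof (Cmod_push t k Ht); pose proof (Rmax_l M 1).
    assert (0 <= t * push_len k)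
      by (apply Rmult_le_pos; [lra|specialize (x_in_shells k); unfold push_len; lra]).
    lra.
Qed.

End Push.

(** * Turning onto the positive real axis and assembling the path *)

(* The intermediate point on the imaginary axis lies on the same side as [a], so neither
   segment passes near the origin. *)
Definition axis_point (a : C) : C := (0, if Rle_dec 0 (Im a) then Cmod a else - Cmod a).

Definition turn (a : nat -> C) : R -> nat -> C :=
  concat (fun t k => segment (a k) (axis_point (a k)) t)
         (fun t k => segment (axis_point (a k)) (RtoC (Cmod (a k))) t).

Lemma Cmod_axis_point (a : C) : Cmod (axis_point a) = Cmod a.
Proof.
  unfold axis_point; pose proof (Cmod_ge_0 a).
  apply Rle_antisym; [apply Cmod_le_of_sq|apply Cmod_ge_of_sq];
    destruct (Rle_dec 0 (Im a)); simpl; nra.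
Qed.

Lemma Cmod_RtoC_Cmod (a : C) : Cmod (RtoC (Cmod a)) = Cmod a.
Proof. rewrite Cmod_R; apply Rabs_pos_eq, Cmod_ge_0. Qed.

Lemma admissible_turn (T : nat -> R) (a : nat -> C) :
  shells T -> (forall k, T k / 2 <= Cmod (a k) <= T k) -> admissible (turn a).
Proof.
  intros HT Ha.
  assert (Haxis : forall k, T k / 2 <= Cmod (axis_point (a k)) <= T k)
    by (intros k; rewrite Cmod_axis_point; auto).
  assert (Hreal : forall k, T k / 2 <= Cmod (RtoC (Cmod (a k))) <= T k)
    by (intros k; rewrite Cmod_RtoC_Cmod; auto).
  apply admissible_concat.
  - apply (admissible_segments_annuli T); auto.
    intros k; unfold axis_point; pose proof (Cmod_ge_0 (a k)).
    destruct (Rle_dec 0 (Im (a k))); simpl; nra.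
  - apply (admissible_segments_annuli T); auto.
    intros k; unfold axis_point; simpl; lra.
  - extensionality k; rewrite segment_1, segment_0; reflexivity.
Qed.

Lemma turn_0 (a : nat -> C) : turn a 0 = a.
Proof. unfold turn; rewrite concat_0; extensionality k; apply segment_0. Qed.

Lemma turn_1 (a : nat -> C) (k : nat) : turn a 1 k = RtoC (Cmod (a k)).
Proof. unfold turn; rewrite concat_1; apply segment_1. Qed.

Definition slide (a b : nat -> C) (t : R) (k : nat) : C :=
  segment (RtoC (Cmod (a k))) (RtoC (Cmod (b k))) t.

Lemma admissible_slide (T : nat -> R) (a b : nat -> C) :
  shells T ->
  (forall k, T k / 2 <= Cmod (a k) <= T k) -> (forall k, T k / 2 <= Cmod (b k) <= T k) ->
  admissible (slide a b).
Proof.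
  intros HT Ha Hb; apply (admissible_segments_annuli T); auto.
  - intros k; rewrite Cmod_RtoC_Cmod; auto.
  - intros k; rewrite Cmod_RtoC_Cmod; auto.
  - intros k; simpl; pose proof (Cmod_ge_0 (a k)); pose proof (Cmod_ge_0 (b k)); nra.
Qed.

Fixpoint shell_radii (x y : nat -> C) (k : nat) : R :=
  match k with
  | O => 2 * Cmod (x O) + 2 * Cmod (y O) + 1
  | S k => 2 * Cmod (x (S k)) + 2 * Cmod (y (S k)) + 4 * shell_radii x y k + 1
  end.

Lemma shell_radii_ge (x y : nat -> C) (k : nat) :
  2 * Cmod (x k) + 2 * Cmod (y k) + INR k + 1 <= shell_radii x y k.
Proof.
  induction k as [|k IH]; [simpl; lra|].
  cbn [shell_radii]; rewrite S_INR.
  pose proof (Cmod_ge_0 (x k)); pose proof (Cmod_ge_0 (y k)); pose proof (pos_INR k); lra.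
Qed.

Lemma shells_shell_radii (x y : nat -> C) : shells (shell_radii x y).
Proof.
  split; intros k; pose proof (shell_radii_ge x y k); pose proof (Cmod_ge_0 (x k));
    pose proof (Cmod_ge_0 (y k)); pose proof (pos_INR k); try lra.
  simpl; pose proof (Cmod_ge_0 (x (S k))); pose proof (Cmod_ge_0 (y (S k))); lra.
Qed.

Definition to_shells (x : nat -> C) (T : nat -> R) (h : R) : R -> nat -> C :=
  concat (push x T h) (turn (push_end x T h)).

Lemma admissible_to_shells (x : nat -> C) (T : nat -> R) (h : R) :
  Conf_lf x -> shells T -> (forall k, 2 * Cmod (x k) <= T k) -> 0 <= h <= 1 ->
  (forall i j, h <> push_collision x T i j) -> admissible (to_shells x T h).
Proof.
  intros Hx HT HxT Hh Hcoll; apply admissible_concat.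
  - apply admissible_push; auto.
  - apply (admissible_turn T); auto; intros k; apply Cmod_push_end; auto.
  - rewrite turn_0; extensionality k; apply segment_1.
Qed.

Lemma to_shells_0 (x : nat -> C) (T : nat -> R) (h : R) : to_shells x T h 0 = x.
Proof. unfold to_shells; rewrite concat_0; extensionality k; apply segment_0. Qed.

Lemma to_shells_1 (x : nat -> C) (T : nat -> R) (h : R) (k : nat) :
  to_shells x T h 1 k = RtoC (Cmod (push_end x T h k)).
Proof. unfold to_shells; rewrite concat_1; apply turn_1. Qed.

Lemma admissible_path_between (x y : nat -> C) :
  Conf_lf x -> Conf_lf y -> exists g, admissible g /\ g 0 = x /\ g 1 = y.
Proof.
  intros Hx Hy; set (T := shell_radii x y); pose proof (shells_shell_radii x y) as HT.
  assert (HxyT : forall k, 2 * Cmod (x k) <= T k /\ 2 * Cmod (y k) <= T k).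
  { intros k; pose proof (shell_radii_ge x y k).
    pose proof (Cmod_ge_0 (x k)); pose proof (Cmod_ge_0 (y k)); pose proof (pos_INR k).
    unfold T; lra. }
  destruct (exists_unit_real_avoiding2 (push_collision x T) (push_collision y T))
    as [h [Hh Hcoll]].
  exists (concat (to_shells x T h)
            (concat (slide (push_end x T h) (push_end y T h)) (reverse (to_shells y T h)))).
  split; [|split].
  - apply admissible_concat.
    + apply admissible_to_shells; auto; [intros k; apply HxyT|apply Hcoll].
    + apply admissible_concat.
      * apply (admissible_slide T); auto; intros k; apply Cmod_push_end; auto;
          intros l; apply HxyT.
      * apply admissible_reverse, admissible_to_shells; auto; [intros k; apply HxyT|apply Hcoll].
      * extensionality k; rewrite reverse_0, to_shells_1; apply segment_1.
    + extensionality k; rewrite to_shells_1, concat_0; symmetry; apply segment_0.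
  - rewrite concat_0; apply to_shells_0.
  - rewrite !concat_1, reverse_1; apply to_shells_0.
Qed.

Theorem mainTheorem6 (phi : nat -> C -> R) (Hphi : vague_seq phi) :
  path_connected_Conf phi.
Proof.
  intros x y Hx Hy.
  destruct (admissible_path_between x y Hx Hy) as [g [Hg [Hg0 Hg1]]].
  exists g; split; [|split; [|split]]; auto.
  - intros t Ht; apply admissible_Conf_lf; auto.
  - intros t Ht; apply admissible_d_Sigma_cont; auto; apply Hphi.
Qed.
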